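(* Let $q$ be a prime power and $b,k,t$ positive integers with $t\ge\lceil\frac{9+b}{2}\rceil$ and $b\le k\le(2t-b+1)^2$. Then \[ r_b^{wt_b}(k,t)\le\frac{q(2t-b)}{q\left(1-\sqrt{\frac{\ln(2t-b+1)}{2t-b+1}}\right)-1}. \]
   Context: For $\boldsymbol{z}=(z_0,\ldots,z_{n-1}),\boldsymbol{w}\in\mathbb{F}_q^n$, $d_b(\boldsymbol{z},\boldsymbol{w})$ is the number of $i\in\{0,\ldots,n-1\}$ with $(z_i,\ldots,z_{i+b-1})\ne(w_i,\ldots,w_{i+b-1})$ (indices mod $n$), and $wt_b(\boldsymbol{x})=d_b(\boldsymbol{x},\boldsymbol{0})$ is the $b$-symbol weight function on $\mathbb{F}_q^k$. A systematic encoding $\mathrm{Enc}(\boldsymbol{x})=(\boldsymbol{x},p(\boldsymbol{x}))\in\mathbb{F}_q^{k+r}$ is a function-correcting $b$-symbol code for $f$ if $d_b(\mathrm{Enc}(\boldsymbol{x}_1),\mathrm{Enc}(\boldsymbol{x}_2))\ge 2t+1$ whenever $f(\boldsymbol{x}_1)\ne f(\boldsymbol{x}_2)$; $r_b^f(k,t)$ is the smallest $r$ for which one exists. *)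

From HB Require Import structures.
From mathcomp Require Import all_boot all_order all_algebra all_field.
From mathcomp Require Import reals exp.
Set Implicit Arguments. Unset Strict Implicit. Unset Printing Implicit Defensive.
Import Order.TTheory GRing.Theory Num.Theory.
Local Open Scope ring_scope.

Definition dist_b (F : finFieldType) (n b : nat) (z w : n.-tuple F) : nat :=
  #|[set i : 'I_n | [exists j : 'I_b,
      nth 0 z ((i + j) %% n)%N != nth 0 w ((i + j) %% n)%N]]|.

Definition wt_b (F : finFieldType) (k b : nat) (x : k.-tuple F) : nat :=
  dist_b b x [tuple of nseq k 0].

Definition sys_enc (F : finFieldType) (k r : nat)
  (p : k.-tuple F -> r.-tuple F) (x : k.-tuple F) : (k + r).-tuple F :=
  cat_tuple x (p x).

Definition is_FCbSC (F : finFieldType) (T : eqType) (k r b t : nat)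
  (f : k.-tuple F -> T) (p : k.-tuple F -> r.-tuple F) : Prop :=
  forall x1 x2 : k.-tuple F, f x1 != f x2 ->
    (2 * t + 1 <= dist_b b (sys_enc p x1) (sys_enc p x2))%N.

Definition FCbSC_exists (F : finFieldType) (T : eqType) (k b t : nat)
  (f : k.-tuple F -> T) (r : nat) : Prop :=
  exists p : k.-tuple F -> r.-tuple F, @is_FCbSC F T k r b t f p.

From HB Require Import structures.
From mathcomp Require Import all_boot all_order all_algebra all_field.
From mathcomp Require Import reals exp.
From mathcomp Require Import ring lra zify.
From mathcomp Require Import unstable topology normedtype sequences derive realfun.
Set Implicit Arguments. Unset Strict Implicit. Unset Printing Implicit Defensive.
Import Order.TTheory GRing.Theory Num.Theory.
Import numFieldNormedType.Exports.
Local Open Scope ring_scope.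

(* Encode [x] as [(x, c (wt_b x))], where [c] is a [q]-ary code of length [r]
   with [k + 1] words at pairwise Hamming distance at least [n = 2t - b + 1].
   Messages of different weight then have encodings differing in at least
   [n + 1] positions, and two words of length [N] differing in [d > 0]
   positions are at [b]-symbol distance at least [min N (d + b - 1)], which is
   at least [2t + 1] here. Such a code is built greedily as long as [k] times
   the volume of a Hamming ball of radius [n - 1] stays below [q ^ r]; by
   Hoeffding's inequality for the binomial distribution this holds for [r] the
   integer part of the stated bound. *)

Lemma ge0_derive_le (R : realType) (f df : R -> R) (a b : R) : a <= b ->
  (forall x, is_derive x (1:R) f (df x)) ->
  (forall x, a <= x <= b -> 0 <= df x) -> f a <= f b.
Proof.
move=> ab fd df_ge0; rewrite -subr_ge0.
have [|c cab ->] := MVT_segment ab (fun x _ => fd x).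
  apply/continuous_subspaceT => x; case: (fd x) => fx_derivable _.
  exact/differentiable_continuous/derivable1_diffP.
by rewrite mulr_ge0 ?subr_ge0 // df_ge0 //; rewrite in_itv /= in cab.
Qed.

Section BernoulliMGF.
Variables (R : realType) (p : R).
Hypotheses (p_ge0 : 0 <= p) (p_le1 : p <= 1).

Definition bernoulli_mgf (x : R) : R := 1 - p + p * expR x.

Lemma bernoulli_mgf_gt0 x : 0 < bernoulli_mgf x.
Proof.
rewrite /bernoulli_mgf; have [->|p_neq0] := eqVneq p 0.
  by rewrite subr0 mul0r addr0.
by rewrite ltr_wpDl ?subr_ge0 // mulr_gt0 ?expR_gt0 // lt_def p_neq0.
Qed.

Lemma is_derive_bernoulli_mgf x : is_derive x (1:R) bernoulli_mgf (p * expR x).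
Proof.
have := is_deriveD (is_derive_cst (1 - p) x 1) (is_deriveZ p (is_derive_expR x)).
by rewrite add0r.
Qed.

(* The left side is the derivative of [ln \o bernoulli_mgf] at [c]. By AM-GM,
   [(1 - p) * (p * expR x) <= bernoulli_mgf x ^+ 2 / 4], hence
   [(1 - p) / bernoulli_mgf x + x / 4] is nondecreasing. *)
Lemma tilted_mean_le c : 0 <= c -> p * expR c / bernoulli_mgf c <= p + c / 4.
Proof.
move=> c_ge0.
pose psi x := (1 - p) * (bernoulli_mgf x)^-1 + 4^-1 * x.
have psi' x : is_derive x (1:R) psi
    ((1 - p) * (- bernoulli_mgf x ^- 2 * (p * expR x)) + 4^-1).
  have := is_deriveD (is_deriveZ (1 - p)
      (is_deriveV (lt0r_neq0 (bernoulli_mgf_gt0 x)) (is_derive_bernoulli_mgf x)))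
    (is_deriveZ (4^-1) (@is_derive_id R R^o x 1)).
  move/is_derive_eq; apply.
  by rewrite -[LHS]/((1 - p) * (- bernoulli_mgf x ^- 2 * (p * expR x)) + 4^-1 * 1) mulr1.
have psi_mono : psi 0 <= psi c.
  apply: ge0_derive_le c_ge0 psi' _ => x _.
  have M_gt0 := bernoulli_mgf_gt0 x.
  have am_gm : (1 - p) * (p * expR x) <= bernoulli_mgf x ^+ 2 / 4.
    have := sqr_ge0 (1 - p - p * expR x); rewrite /bernoulli_mgf; nra.
  have -> : (1 - p) * (- bernoulli_mgf x ^- 2 * (p * expR x))
      = - ((1 - p) * (p * expR x) / bernoulli_mgf x ^+ 2).
    by field; exact: lt0r_neq0.
  rewrite addrC subr_ge0 ler_pdivrMr ?exprn_gt0 //.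
  by move: am_gm; rewrite ler_pdivlMr //; nra.
have -> : p * expR c / bernoulli_mgf c = 1 - (1 - p) / bernoulli_mgf c.
  by move: (lt0r_neq0 (bernoulli_mgf_gt0 c)); rewrite /bernoulli_mgf => ?; field.
move: psi_mono; rewrite /psi /bernoulli_mgf expR0 mulr1 subrK invr1 mulr1 mulr0 addr0.
lra.
Qed.

Lemma bernoulli_mgf_le l : 0 <= l -> bernoulli_mgf l <= expR (p * l + l ^+ 2 / 8).
Proof.
move=> l_ge0.
pose g x := p * x + 8^-1 * (x * x) - ln (bernoulli_mgf x).
have g' x : is_derive x (1:R) g (p + 4^-1 * x - p * expR x / bernoulli_mgf x).
  have hid := @is_derive_id R R^o x 1.
  have := is_deriveB
    (is_deriveD (is_deriveZ p hid) (is_deriveZ (8^-1) (is_deriveM hid hid)))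
    (is_derive1_comp (is_derive1_ln (bernoulli_mgf_gt0 x)) (is_derive_bernoulli_mgf x)).
  move/is_derive_eq; apply.
  rewrite -[LHS]/(p * 1 + 8^-1 * (x * 1 + x * 1) - (bernoulli_mgf x)^-1 * (p * expR x)).
  have := lt0r_neq0 (bernoulli_mgf_gt0 x).
  by move: (bernoulli_mgf x) => M M_neq0; field.
have : g 0 <= g l.
  apply: ge0_derive_le l_ge0 g' _ => x /andP[x_ge0 _].
  by have := tilted_mean_le x_ge0; lra.
rewrite /g /bernoulli_mgf expR0 mulr1 subrK ln1 !(mulr0, mul0r) !addr0 subrr => g_ge0.
rewrite -[leLHS]lnK ?posrE ?bernoulli_mgf_gt0 // ler_expR expr2 /bernoulli_mgf; lra.
Qed.

End BernoulliMGF.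

Section HammingBall.
Variables (F : finType) (r : nat).
Implicit Types g h : {ffun 'I_r -> F}.

Definition hamming g h := #|[set i | g i != h i]|.

Definition agreement g h := #|[set i | g i == h i]|.

Lemma hammingC g h : hamming g h = hamming h g.
Proof. by apply: eq_card => i; rewrite !inE eq_sym. Qed.

Lemma agreement_hamming g h : (agreement g h + hamming g h)%N = r.
Proof.
rewrite -[RHS]card_ord -(cardsC [set i | g i == h i]); congr (_ + _)%N.
by apply: eq_card => i; rewrite !inE.
Qed.

Lemma sum_expr_agreement (R : comNzRingType) h (z : R) :
  \sum_g z ^+ agreement g h = (z + (#|F| - 1)%:R) ^+ r.
Proof.
have zE g : z ^+ agreement g h = \prod_i (if g i == h i then z else 1).
  rewrite -big_mkcond /= prodr_const /agreement; congr (_ ^+ _).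
  by apply: eq_card => i; rewrite inE.
rewrite (eq_bigr _ (fun g _ => zE g)).
rewrite -(bigA_distr_bigA (fun i (y : F) => if y == h i then z else 1)).
rewrite -[in RHS](card_ord r) -prodr_const; apply: eq_bigr => i _.
rewrite (bigD1 (h i)) //= eqxx; congr (_ + _).
rewrite (eq_bigr (fun _ => 1)); last by move=> y /negbTE ->.
rewrite sumr_const; congr (_ *+ _).
by rewrite subn1 -(cardC1 (h i)); apply: eq_card => y; rewrite !inE.
Qed.

Lemma card_agreement_ge_chernoff (R : numDomainType) h (a : nat) (z : R) : 1 <= z ->
  #|[set g | (a <= agreement g h)%N]|%:R * z ^+ a <= (z + (#|F| - 1)%:R) ^+ r.
Proof.
move=> z_ge1.
rewrite -(sum_expr_agreement h) mulr_natl -sumr_const big_mkcond /=.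
apply: ler_sum => g _; case: ifP => [|_]; last exact/exprn_ge0/(le_trans ler01).
by rewrite inE => ag; exact: ler_weXn2l.
Qed.

(* Hoeffding's inequality for the binomial number of agreements with [h]:
   Chernoff's bound with parameter [4 * d / r], combined with [bernoulli_mgf_le]. *)
Lemma card_agreement_ge_hoeffding (R : realType) h (a : nat) : (0 < r)%N ->
  let d : R := a%:R - r%:R / #|F|%:R in 0 <= d ->
  #|[set g | (a <= agreement g h)%N]|%:R
    <= #|F|%:R ^+ r * expR (- (2 * d ^+ 2 / r%:R)).
Proof.
move=> r_gt0 d d_ge0.
have q_gt0 : (0 < #|F|)%N by apply/card_gt0P; exists (h (Ordinal r_gt0)).
set Q : R := #|F|%:R in d d_ge0 *; set V : R := #|_|%:R.
have Q_gt0 : 0 < Q by rewrite ltr0n.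
have r_neq0 : r%:R != 0 :> R by rewrite pnatr_eq0 -lt0n.
set lam := 4 * d / r%:R; set p := Q^-1.
have lam_ge0 : 0 <= lam by rewrite divr_ge0 ?mulr_ge0.
have p_ge0 : 0 <= p by rewrite invr_ge0 ltW.
have p_le1 : p <= 1 by rewrite invr_le1 // ?unitfE ?lt0r_neq0 // (ler_nat R 1).
have shift : expR lam + (#|F| - 1)%:R = Q * bernoulli_mgf p lam.
  rewrite natrB // -/Q /bernoulli_mgf mulrDr mulrBr mulr1 mulrA mulfV ?lt0r_neq0 //.
  by rewrite mul1r; ring.
have expR_lam_ge1 : 1 <= expR lam by rewrite -expR0 ler_expR.
have := card_agreement_ge_chernoff h a expR_lam_ge1.
rewrite -/V shift exprMn -expRM_natl => ball.
have {}ball : V * expR (a%:R * lam) <= Q ^+ r * expR (r%:R * (p * lam + lam ^+ 2 / 8)).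
  apply: le_trans ball _; apply: ler_wpM2l; first by rewrite exprn_ge0 ?ltW.
  rewrite expRM_natl lerXn2r ?nnegrE ?expR_ge0 ?bernoulli_mgf_le //.
  exact/ltW/bernoulli_mgf_gt0.
have -> : - (2 * d ^+ 2 / r%:R) = r%:R * (p * lam + lam ^+ 2 / 8) - a%:R * lam.
  by rewrite /lam /d /p; field; rewrite r_neq0 lt0r_neq0.
by rewrite expRD expRN mulrA ler_pdivlMr ?expR_gt0.
Qed.

Lemma card_hamming_ball_lt (R : realType) h (n k : nat) : (0 < n <= r)%N ->
  let d : R := (r - n + 1)%N%:R - r%:R / #|F|%:R in 0 <= d ->
  k%:R < expR (2 * d ^+ 2 / r%:R) ->
  (k * #|[set g | (hamming g h < n)%N]| < #|F| ^ r)%N.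
Proof.
move=> /andP[n_gt0 n_le_r] d d_ge0 k_lt.
have r_gt0 : (0 < r)%N by apply: leq_trans n_le_r.
have -> : [set g | (hamming g h < n)%N] = [set g | (r - n + 1 <= agreement g h)%N].
  by apply/setP => g; rewrite !inE; have := agreement_hamming g h; lia.
have ball_gt0 : (0 < #|[set g | (r - n + 1 <= agreement g h)%N]|)%N.
  apply/card_gt0P; exists h; rewrite inE.
  suff -> : agreement h h = r by lia.
  by rewrite -[RHS]card_ord; apply: eq_card => i; rewrite !inE eqxx.
have tail := card_agreement_ge_hoeffding (R := R) h r_gt0 d_ge0.
rewrite expRN ler_pdivlMr ?expR_gt0 // in tail.
rewrite -(ltr_nat R) natrM natrX mulrC.
by apply: lt_le_trans tail; rewrite ltr_pM2l // ltr0n.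
Qed.

End HammingBall.

Section GreedyCode.
Variables (F : finType) (r n k : nat).
Local Notation word := {ffun 'I_r -> F}.
Hypothesis ball_small :
  forall h : word, (k * #|[set g | (hamming g h < n)%N]| < #|F| ^ r)%N.

Lemma exists_far_word (m : nat) (c : nat -> word) : (m <= k)%N ->
  exists g, forall i, (i < m)%N -> (n <= hamming g (c i))%N.
Proof.
move=> m_le_k.
set Bad := \bigcup_(i < m) [set g | (hamming g (c i) < n)%N].
have Bad_small : (#|Bad| < #|F| ^ r)%N.
  apply: leq_ltn_trans (card_big_setU _ _ _) _.
  have q_pos : (0 < #|F| ^ r)%N := leq_ltn_trans (leq0n _) (ball_small (c 0)).
  case: m m_le_k {Bad} => [|m] m_le_k; first by rewrite big_ord0.
  rewrite -(ltn_pmul2l (leq_trans (ltn0Sn m) m_le_k)) big_distrr /=.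
  apply: (@leq_ltn_trans (\sum_(i < m.+1) (#|F| ^ r).-1)).
    by apply: leq_sum => i _; rewrite -ltnS prednK ?ball_small.
  rewrite sum_nat_const card_ord; have := ball_small (c 0).
  by move: (#|F| ^ r)%N #|_| => Q V; nia.
have /set0Pn [g] : ~: Bad != set0.
  by rewrite -card_gt0; have := cardsC Bad; rewrite card_ffun card_ord; lia.
rewrite inE => g_notin; exists g => i i_lt_m.
move: g_notin; apply: contraNT; rewrite -ltnNge.
by move=> close; apply/bigcupP; exists (Ordinal i_lt_m); rewrite ?inE.
Qed.

Lemma greedy_code (c0 : word) : exists c : nat -> word,
  forall i j, (i <= k)%N -> (j <= k)%N -> i != j -> (n <= hamming (c i) (c j))%N.
Proof.
suff /(_ k.+1 (leqnn _)) [c c_far] : forall m, (m <= k.+1)%N -> exists c : nat -> word,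
    forall i j, (i < m)%N -> (j < m)%N -> i != j -> (n <= hamming (c i) (c j))%N.
  by exists c.
elim=> [|m IH] m_le; first by exists (fun _ => c0).
have [c c_far] := IH (ltnW m_le).
rewrite ltnS in m_le.
have [g g_far] := exists_far_word c m_le.
exists (fun i => if i == m then g else c i) => i j; rewrite !ltnS.
case: (eqVneq i m) => [->|i_neq] i_le; case: (eqVneq j m) => [->|j_neq] j_le.
- by [].
- by move=> _; apply: g_far; rewrite ltn_neqAle j_neq.
- by move=> _; rewrite hammingC; apply: g_far; rewrite ltn_neqAle i_neq.
- by apply: c_far; rewrite ltn_neqAle ?i_neq ?j_neq.
Qed.

End GreedyCode.

Section BSymbolDistance.
Variables (F : finFieldType) (N b : nat) (z w : N.-tuple F).
Hypothesis b_gt0 : (0 < b)%N.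

(* Let [i0 + os] be the first position of [D] after the agreeing window at
   [i0]. The [b - 1] windows starting just before it contain it, hence differ,
   and start outside [D]; together with the windows starting in [D] this gives
   [#|D| + b - 1] differing windows. *)
Lemma dist_b_ge_of_agreeing_window (D : {set 'I_N}) (i0 : 'I_N) :
  (forall i : 'I_N, i \in D -> nth 0 z i != nth 0 w i) -> D != set0 ->
  (forall j, (j < b)%N -> nth 0 z ((i0 + j) %% N) = nth 0 w ((i0 + j) %% N)) ->
  (#|D| + b - 1 <= dist_b b z w)%N.
Proof.
move=> D_diff /set0Pn[d0 d0_in] i0_agree.
have N_gt0 : (0 < N)%N := leq_ltn_trans (leq0n _) (ltn_ord i0).
pose pos x : 'I_N := Ordinal (ltn_pmod x N_gt0).
rewrite /dist_b; set W := [set i : 'I_N | _].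
have : exists o, (o < N)%N && (pos (i0 + o)%N \in D).
  exists ((d0 + (N - i0)) %% N)%N; rewrite ltn_pmod //=.
  suff -> : pos (i0 + (d0 + (N - i0)) %% N)%N = d0 by [].
  apply: val_inj => /=; rewrite modnDmr.
  have -> : (i0 + (d0 + (N - i0)) = N + d0)%N by have := ltn_ord i0; lia.
  by rewrite modnDl modn_small.
case/ex_minnP => os /andP[os_lt os_in] os_min.
have b_le_os : (b <= os)%N.
  rewrite leqNgt; apply/negP => os_lt_b.
  by have := D_diff _ os_in; rewrite /= i0_agree ?eqxx.
set E := [set pos (i0 + (os - 1 - m))%N | m : 'I_(b - 1)].
have cardE : #|E| = (b - 1)%N.
  rewrite card_imset ?card_ord // => m1 m2 /(congr1 val) /= /eqP.
  rewrite eqn_modDl !modn_small; try lia.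
  by move=> /eqP m12; apply: ord_inj; have := ltn_ord m1; have := ltn_ord m2; lia.
have DE : [disjoint D & E].
  rewrite -setI_eq0; apply/eqP/setP => x; rewrite !inE.
  apply/negP => /andP[x_in /imsetP[m _ xE]].
  have : (os <= os - 1 - m)%N by apply: os_min; rewrite -xE x_in andbT; lia.
  lia.
have DE_sub : D :|: E \subset W.
  apply/subsetP => x; rewrite !inE => /orP[x_in|/imsetP[m _ ->]].
    by apply/existsP; exists (Ordinal b_gt0); rewrite /= addn0 modn_small // D_diff.
  have m1_lt_b : (m + 1 < b)%N by have := ltn_ord m; lia.
  apply/existsP; exists (Ordinal m1_lt_b); rewrite /= modnDml.
  have -> : (i0 + (os - 1 - m) + (m + 1) = i0 + os)%N by have := ltn_ord m; lia.
  exact: D_diff os_in.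
apply: leq_trans (subset_leq_card DE_sub).
by rewrite cardsU (disjoint_setI0 DE) cards0 subn0 cardE; lia.
Qed.

Lemma dist_b_ge_min (D : {set 'I_N}) :
  (forall i : 'I_N, i \in D -> nth 0 z i != nth 0 w i) -> D != set0 ->
  (minn N (#|D| + b - 1) <= dist_b b z w)%N.
Proof.
move=> D_diff D_neq0.
have [all_diff|] := boolP [forall i : 'I_N, [exists j : 'I_b,
    nth 0 z ((i + j) %% N) != nth 0 w ((i + j) %% N)]].
  apply: leq_trans (geq_minl _ _) _; rewrite /dist_b -[X in (X <= _)%N]card_ord.
  by apply: subset_leq_card; apply/subsetP => i _; rewrite inE (forallP all_diff).
rewrite negb_forall => /existsP[i0]; rewrite negb_exists => /forallP i0_agree.
apply: leq_trans (geq_minr _ _) (@dist_b_ge_of_agreeing_window D i0 D_diff D_neq0 _).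
by move=> j j_lt_b; apply/eqP; have := i0_agree (Ordinal j_lt_b); rewrite negbK.
Qed.

End BSymbolDistance.

Lemma wt_b_le (F : finFieldType) (k b : nat) (x : k.-tuple F) : (wt_b b x <= k)%N.
Proof. by rewrite /wt_b /dist_b; apply: leq_trans (max_card _) _; rewrite card_ord. Qed.

Lemma code_is_FCbSC (F : finFieldType) (T : eqType) (k r b t n : nat)
    (f : k.-tuple F -> T) (c : T -> {ffun 'I_r -> F}) :
  (0 < b)%N -> (2 * t + 1 <= n + b)%N -> (2 * t + 1 <= k + r)%N ->
  (forall x1 x2, f x1 != f x2 -> (n <= hamming (c (f x1)) (c (f x2)))%N) ->
  is_FCbSC b t f (fun x => [tuple c (f x) i | i < r]).
Proof.
move=> b_gt0 nb_ge kr_ge c_far x1 x2 f_neq.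
set p := fun x => _.
have [j0 j0_diff] : exists j0 : 'I_k, tnth x1 j0 != tnth x2 j0.
  apply/existsP; apply: contraNT f_neq; rewrite negb_exists => /forallP x_eq.
  apply/eqP; congr f; apply: eq_from_tnth => j.
  by apply/eqP; rewrite -[_ == _]negbK x_eq.
set e1 := sys_enc p x1; set e2 := sys_enc p x2.
set D := [set i : 'I_(k + r) | nth 0 e1 i != nth 0 e2 i].
have nth_lshift x (j : 'I_k) : nth 0 (sys_enc p x) (lshift r j) = tnth x j.
  by rewrite /sys_enc /= nth_cat size_tuple ltn_ord (tnth_nth 0).
have nth_rshift x (i : 'I_r) : nth 0 (sys_enc p x) (rshift k i) = c (f x) i.
  rewrite /sys_enc /= nth_cat size_tuple ltnNge leq_addr /= addKn.
  by rewrite -(tnth_nth 0 (p x) i) tnth_mktuple.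
set Dc := [set i : 'I_r | c (f x1) i != c (f x2) i].
have D_sup : lshift r j0 |: [set rshift k i | i in Dc] \subset D.
  apply/subsetP => i; rewrite !inE => /orP[/eqP ->|/imsetP[i' i'_in ->]].
    by rewrite !nth_lshift.
  by rewrite !nth_rshift; rewrite inE in i'_in.
have card_D : (n.+1 <= #|D|)%N.
  apply: leq_trans (subset_leq_card D_sup).
  rewrite cardsU1 card_imset; last exact: rshift_inj.
  have -> : lshift r j0 \notin [set rshift k i | i in Dc].
    apply/imsetP => -[i _ /(congr1 val) /= j0E].
    by have := ltn_ord j0; rewrite j0E ltnNge leq_addr.
  by rewrite add1n ltnS; apply: c_far.
have D_diff i : i \in D -> nth 0 e1 i != nth 0 e2 i by rewrite inE.
have D_neq0 : D != set0 by rewrite -card_gt0; apply: leq_trans card_D.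
apply: leq_trans (dist_b_ge_min b_gt0 D_diff D_neq0).
by rewrite leq_min kr_ge /=; move: card_D; set m := #|D|; lia.
Qed.

Section LnBounds.
Variable R : realType.

Lemma expR2_lt10 : expR (2 : R) < 10.
Proof.
have e_fifth : (4/5 : R) <= expR (- (1/5)) by have := @expR_ge1Dx R (- (1/5)); lra.
have : (4/5 : R) ^+ 10 <= expR (- 2).
  have -> : (- 2 : R) = 10%:R * (- (1/5)) by rewrite -mulrN; field.
  by rewrite expRM_natl; apply: lerXn2r; rewrite ?nnegrE //; lra.
have : (1/10 : R) < (4/5) ^+ 10 by rewrite !exprS expr0; lra.
move=> /lt_le_trans/[apply].
by rewrite expRN -[X in _ < X]div1r ltr_pdivlMr ?expR_gt0 //; lra.
Qed.

Lemma ln10_lt : ln (10 : R) < 5/2.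
Proof.
have e_eighth : (9/8 : R) <= expR (1/8) by have := @expR_ge1Dx R (1/8); lra.
have : (9/8 : R) ^+ 20 <= expR (5/2).
  have -> : (5/2 : R) = 20%:R * (1/8) by field.
  by rewrite expRM_natl; apply: lerXn2r; rewrite ?nnegrE //; lra.
have : (10 : R) < (9/8) ^+ 20 by rewrite !exprS expr0; lra.
by move=> /lt_le_trans/[apply] lt10; rewrite -ltr_expR lnK ?posrE.
Qed.

Lemma ln_ge2 (x : R) : 10 <= x -> 2 <= ln x.
Proof.
move=> x_ge10; rewrite -ler_expR lnK ?posrE; last lra.
by have := expR2_lt10; lra.
Qed.

Lemma ln_lt_div4 (x : R) : 10 <= x -> ln x < x / 4.
Proof.
move=> x_ge10.
have -> : x = 10 * (1 + (x / 10 - 1)) by field.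
rewrite lnM ?posrE; [|lra|lra].
by have := @le_ln1Dx R (x / 10 - 1) ltac:(lra); have := ln10_lt; lra.
Qed.

End LnBounds.

(* Read [Q = q], [N = n], [L = ln n], [s = sqrt (L / N)], [B] the redundancy
   bound and [r] its integer part. The equation defining [B] says that the
   slack [B * (1 - 1/Q) - (N - 1)] equals [B * s], whose square is
   [B * L * (B / N) > B * L]; rounding [B] down to [r] costs less than the
   margin. *)
Lemma redundancy_bound_slack (R : realFieldType) (Q N L s B r : R) :
  2 <= Q -> 10 <= N -> 2 <= L -> 0 < s -> s < 1/2 -> s ^+ 2 * N = L ->
  B * (Q * (1 - s) - 1) = Q * (N - 1) -> r <= B -> B < r + 1 ->
  [/\ N < B, 0 < r - N + 1 - r / Q & r * L < (r - N + 1 - r / Q) ^+ 2].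
Proof.
move=> Q_ge2 N_ge10 L_ge2 s_gt0 s_lt sN BE rB Br.
have B_gt0 : 0 < B.
  have : 0 < B * (Q * (1 - s) - 1) by rewrite BE; nra.
  by rewrite pmulr_lgt0 //; nra.
have B_gtN1 : B * (1 - s) > N - 1.
  have : B * (1 - s) * Q = Q * (N - 1) + B by rewrite -BE; ring.
  nra.
have sBN_gt2 : s * (B - N) > 2.
  have : (s * (B - N) - 2) * (1 - s) > 0 by nra.
  nra.
have Q_gt0 : 0 < Q by lra.
have slackE : B * (1 - Q^-1) - (N - 1) = B * s.
  have : B * (1 - Q^-1) - (N - 1) - B * s = (B * (Q * (1 - s) - 1) - Q * (N - 1)) / Q.
    by field; exact: lt0r_neq0.
  by rewrite BE subrr mul0r; lra.
set p := Q^-1 in slackE *.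
have p_gt0 : 0 < p by rewrite invr_gt0.
have p_le : p <= 1/2.
  have : Q * p = 1 by rewrite mulfV //; exact: lt0r_neq0.
  nra.
have B_gtN : N < B by nra.
have sB_gt2 : B * s > 2 by nra.
set e := B - r.
have e_ge0 : 0 <= e by rewrite /e; lra.
have e_lt1 : e < 1 by rewrite /e; lra.
have ep_le1 : e * (1 - p) <= 1 by nra.
have ep_ge0 : 0 <= e * (1 - p) by nra.
have -> : r - N + 1 - r * p = B * s - e * (1 - p) by rewrite /e; lra.
split; [by [] | lra |].
have -> : r = B - e by rewrite /e; ring.
rewrite -sN.
have : 0 < B * s * (s * (B - N) - 2) by apply: mulr_gt0; lra.
have : e * (1 - p) * (B * s) <= B * s by nra.
have : 0 <= e * (s ^+ 2 * N) by apply: mulr_ge0 => //; nra.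
nra.
Qed.

Definition redundancy_bound (R : realType) (q n : nat) : R :=
  q%:R * (n%:R - 1) / (q%:R * (1 - Num.sqrt (ln n%:R / n%:R)) - 1).

Lemma truncn_redundancy_bound (R : realType) (q n : nat) :
  (1 < q)%N -> (10 <= n)%N ->
  let r := Num.truncn (redundancy_bound R q n) in
  let d : R := (r - n + 1)%N%:R - r%:R / q%:R in
  [/\ r%:R <= redundancy_bound R q n, (n <= r)%N, 0 <= d
    & (n ^ 2)%:R < expR (2 * d ^+ 2 / r%:R)].
Proof.
move=> q_gt1 n_ge10; rewrite /redundancy_bound.
set Q : R := q%:R; set N : R := n%:R; set L := ln N; set s := Num.sqrt (L / N).
set B := Q * (N - 1) / (Q * (1 - s) - 1).
set r := Num.truncn B; set d : R := (r - n + 1)%N%:R - r%:R / Q.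
have Q_ge2 : 2 <= Q by rewrite /Q (ler_nat R 2 q).
have N_ge10 : 10 <= N by rewrite /N (ler_nat R 10 n).
have L_ge2 : 2 <= L := ln_ge2 N_ge10.
have L_lt : L < N / 4 := ln_lt_div4 N_ge10.
have s2 : s ^+ 2 = L / N by rewrite sqr_sqrtr // divr_ge0 //; lra.
have s_gt0 : 0 < s by rewrite sqrtr_gt0 divr_gt0 //; lra.
have s_lt : s < 1/2.
  have : s ^+ 2 < 1/4 by rewrite s2 ltr_pdivrMr; lra.
  nra.
have sN : s ^+ 2 * N = L by rewrite s2 divfK //; lra.
have den_gt0 : 0 < Q * (1 - s) - 1 by nra.
have BE : B * (Q * (1 - s) - 1) = Q * (N - 1) by rewrite divfK //; exact: lt0r_neq0.
have B_ge0 : 0 <= B by rewrite divr_ge0 //; nra.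
have /andP[rB Br] := truncn_itv B_ge0; rewrite -/r -natr1 in rB Br.
have [NB d_gt0 rL_lt] :=
  redundancy_bound_slack Q_ge2 N_ge10 L_ge2 s_gt0 s_lt sN BE rB Br.
have n_le_r : (n <= r)%N by rewrite -ltnS -(ltr_nat R) -natr1; lra.
have dE : d = r%:R - N + 1 - r%:R / Q by rewrite /d natrD natrB.
split=> //; first by rewrite dE; lra.
have r_gt0 : 0 < r%:R :> R by rewrite ltr0n; apply: leq_trans n_le_r; lia.
rewrite natrX -/N -[N]lnK ?posrE; last lra.
by rewrite -expRM_natl ltr_expR -mulrA ltr_pM2l // ltr_pdivlMr // dE -/L mulrC.
Qed.

Theorem mainTheorem18 (R : realType) (F : finFieldType) (b k t : nat) :
  (0 < b)%N -> (0 < k)%N -> (0 < t)%N ->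
  ((10 + b) %/ 2 <= t)%N ->
  (b <= k)%N -> (k <= (2 * t - b + 1) ^ 2)%N ->
  exists r : nat,
    @FCbSC_exists F nat k b t (@wt_b F k b) r /\
    (r%:R : R) <=
      (#|F|%:R * (2 * t - b)%N%:R) /
      (#|F|%:R * (1 - Num.sqrt (ln ((2 * t - b + 1)%N%:R) / (2 * t - b + 1)%N%:R)) - 1).
Proof.
move=> b_gt0 k_gt0 _ t_ge b_le_k k_le.
set n := (2 * t - b + 1)%N in k_le *.
have b_le_2t : (b + 9 <= 2 * t)%N by move: t_ge; lia.
have n_ge10 : (10 <= n)%N by rewrite /n; lia.
have -> : (2 * t - b)%N%:R = n%:R - 1 :> R by rewrite natrD addrK.
have [r_le n_le_r d_ge0 n2_lt] :=
  truncn_redundancy_bound R (card_finNzRing_gt1 F) n_ge10.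
set r := Num.truncn _ in r_le n_le_r d_ge0 n2_lt.
have ball_small (h : {ffun 'I_r -> F}) :
    (k * #|[set g | (hamming g h < n)%N]| < #|F| ^ r)%N.
  apply: (card_hamming_ball_lt (R := R)) d_ge0 (le_lt_trans _ n2_lt).
    by rewrite n_le_r andbT; lia.
  by rewrite ler_nat.
have [c c_far] := greedy_code ball_small [ffun => 0].
exists r; split => //; exists (fun x => [tuple c (wt_b b x) i | i < r]).
apply: (code_is_FCbSC (n := n)) => //.
- by rewrite /n; lia.
- by move: n_le_r; rewrite /n; lia.
- by move=> x1 x2 wt_neq; apply: c_far; rewrite ?wt_b_le.
Qed.
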